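(* The robustness of activity $\mathsf A_r$ satisfies: (1) $\mathsf A_r(\rho)\in[0,d-1]$ for all $\rho\in\mathsf{St}(S)$, and the value $d-1$ is attained (e.g. by $\rho=|d\rangle\langle d|$); (2) $\mathsf A_r(\rho)=0$ if and only if $\rho\in\mathsf P(S)$; (3) $\mathsf A_r(p\rho_1+(1-p)\rho_2)\le p\,\mathsf A_r(\rho_1)+(1-p)\,\mathsf A_r(\rho_2)$ for all $p\in[0,1]$ and states $\rho_1,\rho_2$; (4) $\mathsf A_r(\mathcal C(\rho))\le\mathsf A_r(\rho)$ for every passivity-preserving channel $\mathcal C$ and every state $\rho$.
   Context: $S$ is a $d$-dimensional quantum system with non-degenerate Hamiltonian $H=\sum_i E_i|i\rangle\langle i|$, $E_1<\dots<E_d$. $\mathsf{St}(S)$ is the set of density matrices; $\mathsf P(S)$ is the set of passive states, i.e. states $\sum_i p_i|i\rangle\langle i|$ with $p_1\ge\dots\ge p_d$. The robustness of activity is $\mathsf A_r(\rho)=\min\{t\ge0:\ \exists\sigma\in\mathsf{St}(S)\text{ with }(\rho+t\sigma)/(1+t)\in\mathsf P(S)\}$. A channel $\mathcal C$ is passivity-preserving if $\mathcal C(\mathsf P(S))\subseteq\mathsf P(S)$. *)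

From HB Require Import structures.
From mathcomp Require Import all_boot all_order all_algebra.
From mathcomp Require Import complex mxtens.
From mathcomp Require Import classical_sets reals.

Set Implicit Arguments.
Unset Strict Implicit.
Unset Printing Implicit Defensive.

Import Order.TTheory GRing.Theory Num.Theory.
Local Open Scope ring_scope.
Local Open Scope complex_scope.

Section Quantum.
Variable R : realType.
Local Notation C := (R[i]).

Definition adjmx m n (A : 'M[C]_(m, n)) : 'M[C]_(n, m) := (map_mx Num.conj A)^T.

(* positive semidefinite: Hermitian and <v, A v> >= 0 for all v
   (in the numClosedFieldType C, [0 <= z] means z is real and nonnegative) *)
Definition psd n (A : 'M[C]_n) : Prop :=
  adjmx A = A /\ forall v : 'cV[C]_n, 0 <= (adjmx v *m A *m v) 0 0.

Definition is_state d (rho : 'M[C]_d) : Prop := psd rho /\ \tr rho = 1.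

(* Passive states P(S), written in the energy eigenbasis |0>,...,|d-1>
   (ordered by strictly increasing energy):
   rho = sum_i p_i |i><i| with p_0 >= p_1 >= ... *)
Definition is_passive d (rho : 'M[C]_d) : Prop :=
  is_state rho /\
  exists p : 'I_d -> R,
    rho = diag_mx (\row_i (p i)%:C) /\
    forall i j : 'I_d, (i <= j)%N -> p j <= p i.

Definition ra_feasible d (rho : 'M[C]_d) (t : R) : Prop :=
  0 <= t /\ exists sigma : 'M[C]_d,
    is_state sigma /\ is_passive ((1 + t)^-1%:C *: (rho + t%:C *: sigma)).

(* robustness of activity A_r(rho) = min { t >= 0 | ... }, rendered as the
   infimum of the feasible set (the minimum when it is attained) *)
Definition robustness_activity d (rho : 'M[C]_d) : R :=
  inf [set t | ra_feasible rho t].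

Definition mxblk k d (X : 'M[C]_(k * d)) (a b : 'I_k) : 'M[C]_d :=
  \matrix_(p, q) X (mxtens_index (a, p)) (mxtens_index (b, q)).

Definition ampliation k d (Phi : 'M[C]_d -> 'M[C]_d) (X : 'M[C]_(k * d))
  : 'M[C]_(k * d) :=
  \sum_(a < k) \sum_(b < k) (delta_mx a b *t Phi (mxblk X a b)).

Definition completely_positive d (Phi : 'M[C]_d -> 'M[C]_d) : Prop :=
  forall k (X : 'M[C]_(k * d)), psd X -> psd (ampliation Phi X).

Definition is_channel d (Phi : {linear 'M[C]_d -> 'M[C]_d}) : Prop :=
  completely_positive Phi /\ forall X, \tr (Phi X) = \tr X.

Definition passivity_preserving d (Phi : 'M[C]_d -> 'M[C]_d) : Prop :=
  forall rho, is_passive rho -> is_passive (Phi rho).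

End Quantum.

From HB Require Import structures.
From mathcomp Require Import all_boot all_order all_algebra.
From mathcomp Require Import complex mxtens.
From mathcomp Require Import classical_sets reals.
From mathcomp Require Import ring lra.

Set Implicit Arguments.
Unset Strict Implicit.
Unset Printing Implicit Defensive.

Import Order.TTheory GRing.Theory Num.Theory.
Local Open Scope ring_scope.
Local Open Scope complex_scope.

(* A value t is feasible for rho exactly when rho = (1 + t) P - t sigma with P
   passive and sigma a state.  Such decompositions survive mixing (mix the P's
   and the sigma's with weights proportional to 1 + t_k and t_k) and
   passivity-preserving channels, which gives convexity and monotonicity.
   Every state admits t = d - 1 with sigma = (1 - rho) / (d - 1), because
   1 - rho is positive and then P is maximally mixed; for rho = |d><d| the
   least weight p_d <= 1/d of P forces 1 <= (1 + t) / d.  If feasible t can be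
   taken arbitrarily small, then |rho_ij| <= t off the diagonal and the
   diagonal of rho decreases up to t, so rho is passive. *)

Section Robustness.
Variable R : realType.
Local Notation C := (R[i]).

Lemma conjcR (x : R) : Num.conj (x%:C) = x%:C :> C.
Proof. exact: conjc_real. Qed.

Lemma ge0_ReK (z : C) : 0 <= z -> (complex.Re z)%:C = z.
Proof. by move=> z0; apply: RRe_real; apply: ger0_real. Qed.

Lemma ge0_eps_eq0 (z : C) : 0 <= z -> (forall e : R, 0 < e -> z <= e%:C) -> z = 0.
Proof.
move=> z0 z_small; rewrite -(ge0_ReK z0) -(rmorph0 (real_complex R)).
congr (_%:C); apply/eqP; rewrite eq_le -ler0c ge0_ReK // z0 andbT.
by apply/ler_addgt0Pr => e /z_small; rewrite add0r -lecR ge0_ReK.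
Qed.

Lemma adjmxE m n (A : 'M[C]_(m, n)) i j : adjmx A i j = (A j i)^*.
Proof. by rewrite /adjmx !mxE. Qed.

Lemma adjmxD m n (A B : 'M[C]_(m, n)) : adjmx (A + B) = adjmx A + adjmx B.
Proof. by apply/matrixP => i j; rewrite !(adjmxE, mxE) rmorphD. Qed.

Lemma adjmxN m n (A : 'M[C]_(m, n)) : adjmx (- A) = - adjmx A.
Proof. by apply/matrixP => i j; rewrite !(adjmxE, mxE) rmorphN. Qed.

Lemma adjmxZ m n a (A : 'M[C]_(m, n)) : adjmx (a *: A) = a^* *: adjmx A.
Proof. by apply/matrixP => i j; rewrite !(adjmxE, mxE) rmorphM. Qed.

Lemma adjmx_delta m n (i : 'I_m) (j : 'I_n) :
  adjmx (delta_mx i j : 'M[C]_(m, n)) = delta_mx j i.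
Proof. by apply/matrixP => a b; rewrite !(adjmxE, mxE) conjc_nat andbC. Qed.

Lemma adjmx1 d : adjmx (1%:M : 'M[C]_d) = 1%:M.
Proof. by apply/matrixP => a b; rewrite !(adjmxE, mxE) rmorph_nat eq_sym. Qed.

Definition sesq d (A : 'M[C]_d) (x y : 'cV[C]_d) : C := (adjmx x *m A *m y) 0 0.

Section Sesquilinear.
Variables (d : nat) (A : 'M[C]_d).

Lemma sesq_delta i j : sesq A (delta_mx i 0) (delta_mx j 0) = A i j.
Proof. by rewrite /sesq adjmx_delta -rowE -colE !mxE. Qed.

Lemma sesqDl x y z : sesq A (x + y) z = sesq A x z + sesq A y z.
Proof. by rewrite /sesq adjmxD !mulmxDl mxE. Qed.

Lemma sesqDr x y z : sesq A z (x + y) = sesq A z x + sesq A z y.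
Proof. by rewrite /sesq !mulmxDr mxE. Qed.

Lemma sesqNl x z : sesq A (- x) z = - sesq A x z.
Proof. by rewrite /sesq adjmxN !mulNmx mxE. Qed.

Lemma sesqNr x z : sesq A z (- x) = - sesq A z x.
Proof. by rewrite /sesq !mulmxN mxE. Qed.

Lemma sesqZl a x z : sesq A (a *: x) z = a^* * sesq A x z.
Proof. by rewrite /sesq adjmxZ -!scalemxAl mxE. Qed.

Lemma sesqZr a x z : sesq A z (a *: x) = a * sesq A z x.
Proof. by rewrite /sesq -!scalemxAr mxE. Qed.

Lemma sesqD B x y : sesq (A + B) x y = sesq A x y + sesq B x y.
Proof. by rewrite /sesq mulmxDr mulmxDl mxE. Qed.

Lemma sesqN x y : sesq (- A) x y = - sesq A x y.
Proof. by rewrite /sesq mulmxN mulNmx mxE. Qed.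

Lemma sesqZ a x y : sesq (a *: A) x y = a * sesq A x y.
Proof. by rewrite /sesq -scalemxAr -scalemxAl mxE. Qed.

Lemma sesq_deltaB i j a b (w := a *: delta_mx i 0 - b *: delta_mx j 0) :
  sesq A w w = a^* * a * A i i - a^* * b * A i j - b^* * a * A j i + b^* * b * A j j.
Proof. by rewrite /w !(sesqDl, sesqDr, sesqNl, sesqNr, sesqZl, sesqZr, sesq_delta); ring. Qed.

Lemma sesq_sum v : sesq A v v = \sum_i \sum_j (v i 0)^* * A i j * v j 0.
Proof.
rewrite /sesq mxE exchange_big /=; apply: eq_bigr => j _.
by rewrite mxE mulr_suml; apply: eq_bigr => i _; rewrite adjmxE.
Qed.

End Sesquilinear.

Lemma sesq1 d (v : 'cV[C]_d) : sesq 1%:M v v = \sum_i (v i 0)^* * v i 0.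
Proof. by rewrite /sesq mulmx1 mxE; apply: eq_bigr => i _; rewrite adjmxE. Qed.

Lemma herm_entry d (A : 'M[C]_d) i j : adjmx A = A -> A j i = (A i j)^*.
Proof. by move=> hA; rewrite -{1}hA adjmxE. Qed.

Lemma psd_diag d (A : 'M[C]_d) i : psd A -> 0 <= A i i.
Proof. by case=> _ /(_ (delta_mx i 0)); rewrite -/(sesq _ _ _) sesq_delta. Qed.

Lemma psd_diag_real d (A : 'M[C]_d) i : psd A -> (complex.Re (A i i))%:C = A i i.
Proof. by move/psd_diag/ge0_ReK. Qed.

Lemma psdZ d (A : 'M[C]_d) (a : R) : 0 <= a -> psd A -> psd (a%:C *: A).
Proof.
move=> a0 [hA qA]; split; first by rewrite adjmxZ conjcR hA.
by move=> v; rewrite -/(sesq _ _ _) sesqZ mulr_ge0 ?ler0c ?qA.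
Qed.

Lemma psdD d (A B : 'M[C]_d) : psd A -> psd B -> psd (A + B).
Proof.
move=> [hA qA] [hB qB]; split; first by rewrite adjmxD hA hB.
by move=> v; rewrite -/(sesq _ _ _) sesqD addr_ge0 ?qA ?qB.
Qed.

Lemma psd_castmx m d (e : d = m) (A : 'M[C]_d) : psd (castmx (e, e) A) <-> psd A.
Proof. by subst m; rewrite castmx_id. Qed.


Lemma state_trace d (A : 'M[C]_d) : is_state A -> \sum_i A i i = 1.
Proof. by case=> _ <-. Qed.

Lemma state_diag_le1 d (A : 'M[C]_d) i : is_state A -> A i i <= 1.
Proof.
move=> hA; rewrite -(state_trace hA) (bigD1 i) //= lerDl.
by apply: sumr_ge0 => k _; apply: psd_diag; case: hA.
Qed.

Lemma psd_sub_state d (A : 'M[C]_d) : is_state A -> psd (1%:M - A).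
Proof.
move=> hs; have [[hA qA] _] := hs.
split; first by rewrite adjmxD adjmxN adjmx1 hA.
move=> v; rewrite -/(sesq _ _ _) sesqD sesqN sesq1.
set N := \sum_i _.
pose w i j := (v j 0)^* *: (delta_mx i 0 : 'cV[C]_d) - (v i 0)^* *: delta_mx j 0.
have lagrange : 2 * (N - sesq A v v) = \sum_i \sum_j sesq A (w i j) (w i j).
  have -> : \sum_i \sum_j sesq A (w i j) (w i j) =
     \sum_i ((\sum_j (v j 0 * (v j 0)^* * A i i)) - (\sum_j ((v i 0)^* * A i j * v j 0))
        - (\sum_j ((v j 0)^* * A j i * v i 0)) + (\sum_j (v i 0 * (v i 0)^* * A j j))).
    apply: eq_bigr => i _; rewrite -!sumrB -big_split /=; apply: eq_bigr => j _.
    by rewrite sesq_deltaB !conjCK; ring.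
  rewrite big_split /= !sumrB /= -[X in _ - X - _ + _]sesq_sum.
  rewrite [X in _ - _ - X + _]exchange_big /= -sesq_sum.
  have trN : \sum_i \sum_j (v j 0 * (v j 0)^* * A i i) = N * \sum_i A i i.
    rewrite mulr_sumr; apply: eq_bigr => i _; rewrite /N mulr_suml.
    by apply: eq_bigr => j _; ring.
  have trN' : \sum_i \sum_j (v i 0 * (v i 0)^* * A j j) = N * \sum_i A i i.
    by rewrite exchange_big.
  rewrite trN trN' (state_trace hs) mulr1; ring.
have : 0 <= 2 * (N - sesq A v v).
  by rewrite lagrange; do 2!apply: sumr_ge0 => ? _; apply: qA.
by rewrite pmulr_rge0 // ltr0n.
Qed.

Lemma state_entry_le1 d (A : 'M[C]_d) i j : is_state A -> `|A i j| <= 1.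
Proof.
move=> hs; have [[hA qA] _] := hs.
have := qA (1 *: delta_mx i 0 - A j i *: delta_mx j 0).
rewrite -/(sesq _ _ _) sesq_deltaB (herm_entry i j hA) conjCK rmorph1.
rewrite -(@expr_le1 _ 2) // normCK.
set s := A i j * (A i j)^*.
have s0 : 0 <= s by apply: mulcJ_ge0.
have -> : 1 * 1 * A i i - 1 * (A i j)^* * A i j - A i j * 1 * (A i j)^* +
   A i j * (A i j)^* * A j j = A i i - s + s * (A j j - 1) by rewrite /s; ring.
move=> h; rewrite -subr_ge0; apply: (le_trans h); rewrite -[1 - s]addr0.
apply: lerD; first by rewrite lerD2r state_diag_le1.
by rewrite mulr_ge0_le0 // subr_le0 state_diag_le1.
Qed.


Lemma state_conv d (A B : 'M[C]_d) (a b : R) : 0 <= a -> 0 <= b -> a + b = 1 ->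
  is_state A -> is_state B -> is_state (a%:C *: A + b%:C *: B).
Proof.
move=> a0 b0 ab1 [pA tA] [pB tB]; split; first by apply: psdD; apply: psdZ.
by rewrite mxtraceD !mxtraceZ tA tB !mulr1 -rmorphD ab1.
Qed.

Lemma passive_conv d (A B : 'M[C]_d) (a b : R) : 0 <= a -> 0 <= b -> a + b = 1 ->
  is_passive A -> is_passive B -> is_passive (a%:C *: A + b%:C *: B).
Proof.
move=> a0 b0 ab1 [sA [pA [eA decA]]] [sB [pB [eB decB]]].
split; first exact: state_conv a0 b0 ab1 sA sB.
exists (fun i => a * pA i + b * pB i); split.
  apply/matrixP => i j; rewrite eA eB !mxE.
  by case: eqP => _; rewrite ?mulr1n ?mulr0n ?mulr0 ?addr0 // rmorphD !rmorphM.
by move=> i j ij; apply: lerD; apply: ler_wpM2l => //; [exact: decA | exact: decB].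
Qed.

Lemma state_delta n : is_state (delta_mx ord_max ord_max : 'M[C]_n.+1).
Proof.
split; last first.
  rewrite /mxtrace (bigD1 ord_max) //= big1 ?addr0; first by rewrite mxE eqxx.
  by move=> i /negbTE ni; rewrite mxE ni.
split=> [|v]; first by rewrite adjmx_delta.
rewrite -(mul_delta_mx (0 : 'I_1)) mulmxA -colE -mulmxA -rowE mxE big_ord1 !mxE.
by rewrite mulrC mulcJ_ge0.
Qed.

Lemma passive_maximally_mixed n :
  is_passive (((n.+1)%:R^-1 : R)%:C *: (1%:M : 'M[C]_n.+1)).
Proof.
have c0 : 0 <= ((n.+1)%:R^-1 : R) by rewrite invr_ge0 ler0n.
split; first split.
- split=> [|v]; first by rewrite adjmxZ conjcR adjmx1.
  rewrite -/(sesq _ _ _) sesqZ sesq1 mulr_ge0 ?ler0c //.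
  by apply: sumr_ge0 => i _; rewrite mulrC mulcJ_ge0.
- rewrite mxtraceZ mxtrace1 -(rmorph_nat (real_complex R)) -rmorphM mulVf //.
  by rewrite pnatr_eq0.
exists (fun=> (n.+1)%:R^-1); split => //; apply/matrixP => i j.
by rewrite !mxE; case: eqP => _; rewrite ?mulr1n ?mulr0n ?mulr0 ?mulr1.
Qed.

Lemma state1_passive (A : 'M[C]_1) : is_state A -> is_passive A.
Proof.
move=> hA; split=> //; exists (fun i => complex.Re (A i i)).
split=> [|i j _]; last by rewrite !ord1.
by apply/matrixP => i j; rewrite !mxE !ord1 mulr1n psd_diag_real //; case: hA.
Qed.


Lemma ra_feasibleP d (A : 'M[C]_d) t : ra_feasible A t <->
  exists S P, [/\ 0 <= t, is_state S, is_passive P & A = (1 + t)%:C *: P - t%:C *: S].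
Proof.
split=> [[t0 [S [hS hP]]]|[S [P [t0 hS hP ->]]]].
  exists S, (((1 + t)^-1)%:C *: (A + t%:C *: S)); split => //.
  by rewrite scalerA -rmorphM mulfV ?rmorph1 ?scale1r ?addrK // gt_eqF // ltr_pwDl.
split=> //; exists S; split=> //.
by rewrite subrK scalerA -rmorphM mulVf ?rmorph1 ?scale1r // gt_eqF // ltr_pwDl.
Qed.


Lemma passive_feasible0 d (A : 'M[C]_d) : is_passive A -> ra_feasible A 0.
Proof.
move=> hA; apply/ra_feasibleP; exists A, A; split=> //; first by case: hA.
by rewrite addr0 rmorph1 scale1r rmorph0 scale0r subr0.
Qed.

Lemma state_feasible d (A : 'M[C]_d) : is_state A -> ra_feasible A d.-1%:R.
Proof.
case: d A => [|[|n]] A hA.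
- by move: hA.2; rewrite /mxtrace big_ord0 => /esym/eqP; rewrite oner_eq0.
- exact/passive_feasible0/state1_passive.
have n1 : (n.+1)%:R != 0 :> R by rewrite pnatr_eq0.
have n2 : (n.+2)%:R != 0 :> R by rewrite pnatr_eq0.
apply/ra_feasibleP; exists (((n.+1)%:R^-1 : R)%:C *: (1%:M - A)).
exists (((n.+2)%:R^-1 : R)%:C *: 1%:M); split.
- by rewrite ler0n.
- split; first by apply: psdZ (psd_sub_state hA); rewrite invr_ge0 ler0n.
  rewrite mxtraceZ raddfB /= mxtrace1 hA.2 -[n.+2%:R]natr1 addrK.
  by rewrite -(rmorph_nat (real_complex R)) -rmorphM mulVf ?rmorph1.
- exact: passive_maximally_mixed.
by rewrite !scalerA -!rmorphM nat1r !mulfV ?rmorph1 // !scale1r subKr.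
Qed.


Lemma feasible_excited_ge n t :
  ra_feasible (delta_mx ord_max ord_max : 'M[C]_n.+1) t -> n%:R <= t.
Proof.
move/ra_feasibleP => [S [P [t0 hS [[_ trP] [p [eP p_dec]]] eA]]].
have s_real := psd_diag_real ord_max hS.1.
set s := complex.Re _ in s_real.
have s0 : 0 <= s by rewrite -ler0c s_real psd_diag //; case: hS.
have := congr1 (fun M : 'M[C]_n.+1 => M ord_max ord_max) eA.
rewrite /= eP !mxE eqxx mulr1n -s_real -!rmorphM -rmorphB => /(@complexI R) top.
have sum_p : \sum_i p i = 1.
  apply: (@complexI R); rewrite rmorph_sum rmorph1 -trP eP mxtrace_diag.
  by apply: eq_bigr => i _; rewrite mxE.
have p_last : n.+1%:R * p ord_max <= 1.
  have -> : n.+1%:R * p ord_max = \sum_(i < n.+1) p ord_max.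
    by rewrite sumr_const card_ord mulr_natl.
  by rewrite -sum_p; apply: ler_sum => i _; apply: p_dec; rewrite -ltnS.
have ts0 : 0 <= t * s by apply: mulr_ge0.
have : n.+1%:R * ((1 + t) * p ord_max) <= 1 + t.
  by rewrite mulrCA -[X in _ <= X]mulr1 ler_wpM2l // ltW // ltr_pwDl.
rewrite -natr1; nra.
Qed.


Lemma feasible_diag_gap d (A : 'M[C]_d) t (i j : 'I_d) : ra_feasible A t ->
  (i <= j)%N -> complex.Re (A j j) <= complex.Re (A i i) + t.
Proof.
move/ra_feasibleP => [S [P [t0 hS [_ [p [-> p_dec]]] ->]]] ij.
have diagE k : complex.Re (((1 + t)%:C *: diag_mx (\row_i (p i)%:C) - t%:C *: S) k k)
    = (1 + t) * p k - t * complex.Re (S k k).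
  by rewrite !mxE eqxx mulr1n -(psd_diag_real k hS.1) -!rmorphM -rmorphB.
have s0 k : 0 <= complex.Re (S k k) by rewrite -ler0c psd_diag_real ?psd_diag //; case: hS.
have s1 k : complex.Re (S k k) <= 1 by rewrite -lecR psd_diag_real ?state_diag_le1 //; case: hS.
rewrite !diagE.
have : (1 + t) * p j <= (1 + t) * p i by rewrite ler_wpM2l ?p_dec // addr_ge0.
have : t * complex.Re (S i i) <= t by rewrite ler_piMr.
have : 0 <= t * complex.Re (S j j) by rewrite mulr_ge0.
lra.
Qed.

Lemma feasible_offdiag d (A : 'M[C]_d) t (i j : 'I_d) : ra_feasible A t ->
  i != j -> `|A i j| <= t%:C.
Proof.
move/ra_feasibleP => [S [P [t0 hS [_ [p [-> _]]] ->]]] /negbTE ij.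
rewrite !mxE ij mulr0n mulr0 add0r normrN normrM ger0_norm ?ler0c //.
by rewrite ler_piMr ?ler0c ?state_entry_le1.
Qed.

Lemma feasible_near0_passive d (A : 'M[C]_d) : is_state A ->
  (forall e : R, 0 < e -> exists2 t, ra_feasible A t & t < e) -> is_passive A.
Proof.
move=> hA small.
have diag_dec (i j : 'I_d) : (i <= j)%N -> complex.Re (A j j) <= complex.Re (A i i).
  move=> ij; apply/ler_addgt0Pr => e /small[t ft te].
  by apply: le_trans (feasible_diag_gap ft ij) _; rewrite lerD2l ltW.
have offdiag0 (i j : 'I_d) : i != j -> A i j = 0.
  move=> ij; apply/normr0_eq0/ge0_eps_eq0 => // e /small[t ft te].
  by apply: le_trans (feasible_offdiag ft ij) _; rewrite lecR ltW.
split=> //; exists (fun i => complex.Re (A i i)); split=> //.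
apply/matrixP => i j; rewrite !mxE; case: eqVneq => [<-|ij].
  by rewrite mulr1n psd_diag_real //; case: hA.
by rewrite mulr0n offdiag0.
Qed.


Lemma ampliation1 d (Phi : 'M[C]_d -> 'M[C]_d) (X : 'M[C]_d) (e : d = (1 * d)%N) :
  ampliation Phi (castmx (e, e) X) = castmx (e, e) (Phi X).
Proof.
have idx0 (p : 'I_d) : cast_ord e p = mxtens_index (ord0 : 'I_1, p).
  by apply: val_inj; rewrite /= mul0n.
rewrite /ampliation !big_ord1.
have -> : mxblk (castmx (e, e) X) 0 0 = X.
  by apply/matrixP => p q; rewrite mxE castmxE -!idx0 !cast_ordK.
apply/matrixP => x y.
case: (mxtens_indexP x) => a p; case: (mxtens_indexP y) => b q.
by rewrite tensmxE castmxE [a]ord1 [b]ord1 mxE eqxx mul1r -!idx0 !cast_ordK.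
Qed.

Lemma channel_state d (Phi : {linear 'M[C]_d -> 'M[C]_d}) (S : 'M[C]_d) :
  is_channel Phi -> is_state S -> is_state (Phi S).
Proof.
move=> [cpPhi tpPhi] [hS trS]; split; last by rewrite tpPhi.
have e : d = (1 * d)%N by rewrite mul1n.
by apply/(psd_castmx e); rewrite -ampliation1; apply/cpPhi/psd_castmx.
Qed.

Lemma feasible_channel d (Phi : {linear 'M[C]_d -> 'M[C]_d}) (A : 'M[C]_d) t :
  is_channel Phi -> passivity_preserving Phi -> ra_feasible A t -> ra_feasible (Phi A) t.
Proof.
move=> chPhi ppPhi /ra_feasibleP[S [P [t0 hS hP ->]]].
apply/ra_feasibleP; exists (Phi S), (Phi P); split; [done | exact: channel_state | exact: ppPhi |].
by rewrite linearB !linearZ.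
Qed.


Lemma feasible_conv d (A1 A2 : 'M[C]_d) (p t1 t2 : R) : 0 <= p <= 1 ->
  ra_feasible A1 t1 -> ra_feasible A2 t2 ->
  ra_feasible (p%:C *: A1 + (1 - p)%:C *: A2) (p * t1 + (1 - p) * t2).
Proof.
move=> /andP[p0 p1] /ra_feasibleP[S1 [P1 [t1_0 hS1 hP1 ->]]].
move=> /ra_feasibleP[S2 [P2 [t2_0 hS2 hP2 ->]]].
set t := p * t1 + (1 - p) * t2.
have q0 : 0 <= 1 - p by rewrite subr_ge0.
have a0 : 0 <= p * t1 by rewrite mulr_ge0.
have b0 : 0 <= (1 - p) * t2 by rewrite mulr_ge0.
have t0 : 0 <= t by rewrite addr_ge0.
have ut : 1 + t != 0 by rewrite gt_eqF // ltr_pwDl.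
(* for t = 0 any state will do *)
pose S := if t == 0 then S1 else ((p * t1) / t)%:C *: S1 + (((1 - p) * t2) / t)%:C *: S2.
pose P := ((p * (1 + t1)) / (1 + t))%:C *: P1 + (((1 - p) * (1 + t2)) / (1 + t))%:C *: P2.
have eS : t%:C *: S = (p * t1)%:C *: S1 + ((1 - p) * t2)%:C *: S2.
  rewrite /S; case: eqP => [t_eq0|/eqP t_neq0].
    have [-> ->] : p * t1 = 0 /\ (1 - p) * t2 = 0 by move: t_eq0; rewrite /t; split; lra.
    by rewrite t_eq0 rmorph0 !scale0r addr0.
  by rewrite scalerDr !scalerA -!rmorphM ![t * _]mulrC !divfK.
have eP : (1 + t)%:C *: P = (p * (1 + t1))%:C *: P1 + ((1 - p) * (1 + t2))%:C *: P2.
  by rewrite scalerDr !scalerA -!rmorphM ![(1 + t) * _]mulrC !divfK.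
apply/ra_feasibleP; exists S, P; split=> //.
- rewrite /S; case: eqP => // /eqP t_neq0.
  by apply: state_conv; rewrite ?divr_ge0 // -mulrDl divff.
- apply: passive_conv => //.
  + by apply: divr_ge0; [apply: mulr_ge0 |]; lra.
  + by apply: divr_ge0; [apply: mulr_ge0 |]; lra.
  + rewrite -mulrDl.
    have -> : p * (1 + t1) + (1 - p) * (1 + t2) = 1 + t by rewrite /t; ring.
    by rewrite divff.
by rewrite eP eS !scalerBr !scalerA -!rmorphM opprD addrACA.
Qed.


Lemma ra_le d (A : 'M[C]_d) t : ra_feasible A t -> robustness_activity A <= t.
Proof. by move=> ft; apply: ge_inf ft; exists 0 => y []. Qed.

Lemma ra_ge d (A : 'M[C]_d) t0 c : ra_feasible A t0 ->
  (forall t, ra_feasible A t -> c <= t) -> c <= robustness_activity A.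
Proof. by move=> ft0 lb; apply: lb_le_inf; [exists t0 | move=> y /lb]. Qed.

Lemma ra_approx d (A : 'M[C]_d) t0 e : ra_feasible A t0 -> 0 < e ->
  exists2 t, ra_feasible A t & t < robustness_activity A + e.
Proof. by move=> ft0 e0; apply: inf_lt; [exists t0 | rewrite ltrDl]. Qed.

Lemma ra_state_bounds d (A : 'M[C]_d) : is_state A ->
  0 <= robustness_activity A <= d.-1%:R.
Proof.
move=> hA; have fA := state_feasible hA.
by rewrite ra_le // andbT; apply: (ra_ge fA) => t [].
Qed.

Lemma ra_excited n :
  robustness_activity (delta_mx ord_max ord_max : 'M[C]_n.+1) = n%:R.
Proof.
have fA := state_feasible (state_delta n).
by apply/eqP; rewrite eq_le (ra_le fA) (ra_ge fA) //; apply: feasible_excited_ge.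
Qed.

Lemma ra_eq0 d (A : 'M[C]_d) : is_state A ->
  robustness_activity A = 0 <-> is_passive A.
Proof.
move=> hA; have fA := state_feasible hA.
split=> [ra0 | /passive_feasible0/ra_le raA].
  apply: feasible_near0_passive hA _ => e e0.
  by have := ra_approx fA e0; rewrite ra0 add0r.
by apply/eqP; rewrite eq_le raA; case/andP: (ra_state_bounds hA).
Qed.

Lemma ra_conv d (p : R) (A1 A2 : 'M[C]_d) : 0 <= p <= 1 ->
  is_state A1 -> is_state A2 ->
  robustness_activity (p%:C *: A1 + (1 - p)%:C *: A2)
    <= p * robustness_activity A1 + (1 - p) * robustness_activity A2.
Proof.
move=> p01 h1 h2; apply/ler_addgt0Pr => e e0.
have [t1 f1 lt1] := ra_approx (state_feasible h1) e0.
have [t2 f2 lt2] := ra_approx (state_feasible h2) e0.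
apply: le_trans (ra_le (feasible_conv p01 f1 f2)) _.
case/andP: p01 => p0 p1; nra.
Qed.

Lemma ra_channel d (Phi : {linear 'M[C]_d -> 'M[C]_d}) (A : 'M[C]_d) :
  is_channel Phi -> passivity_preserving Phi -> is_state A ->
  robustness_activity (Phi A) <= robustness_activity A.
Proof.
move=> chPhi ppPhi hA; apply: (ra_ge (state_feasible hA)) => t.
by move/(feasible_channel chPhi ppPhi)/ra_le.
Qed.

End Robustness.

Theorem mainTheorem9 (R : realType) (n : nat) (E : 'I_n.+1 -> R)
    (hE : forall i j : 'I_n.+1, (i < j)%N -> E i < E j) :
  ((forall rho : 'M[R[i]]_n.+1, is_state rho ->
      0 <= robustness_activity rho <= n%:R) /\
   is_state (delta_mx ord_max ord_max : 'M[R[i]]_n.+1) /\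
   robustness_activity (delta_mx ord_max ord_max : 'M[R[i]]_n.+1) = n%:R) /\
  (forall rho : 'M[R[i]]_n.+1, is_state rho ->
      (robustness_activity rho = 0 <-> is_passive rho)) /\
  (forall (p : R) (rho1 rho2 : 'M[R[i]]_n.+1),
      0 <= p <= 1 -> is_state rho1 -> is_state rho2 ->
      robustness_activity (p%:C *: rho1 + (1 - p)%:C *: rho2)
        <= p * robustness_activity rho1 + (1 - p) * robustness_activity rho2) /\
  (forall (Phi : {linear 'M[R[i]]_n.+1 -> 'M[R[i]]_n.+1}) (rho : 'M[R[i]]_n.+1),
      is_channel Phi -> passivity_preserving Phi -> is_state rho ->
      robustness_activity (Phi rho) <= robustness_activity rho).
Proof.
(* The energies only fix the order of the eigenbasis, built into is_passive. *)
split; [split=> [rho /ra_state_bounds // |] | split].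
- by split; [exact: state_delta | exact: ra_excited].
- exact: ra_eq0.
by split=> [p rho1 rho2 | Phi rho]; [exact: ra_conv | exact: ra_channel].
Qed.
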